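(* Let $(V_1,V_2)$ be a pair of commuting isometries on a Hilbert space $\mathcal H$ with $\operatorname{ran}V_1=\operatorname{ran}V_2$. Then there exist Hilbert spaces $\mathcal L$ and $\mathcal K$ such that, up to unitary equivalence, $\mathcal H=(H^2_{\mathbb D}\otimes\mathcal L)\oplus\mathcal K$ and in this decomposition $$V_1=\begin{pmatrix}M_z\otimes I_{\mathcal L}&0\\0&W_1\end{pmatrix},\qquad V_2=\begin{pmatrix}M_z\otimes W&0\\0&W_2\end{pmatrix}$$ for some unitary $W$ on $\mathcal L$ and commuting unitaries $W_1,W_2$ on $\mathcal K$.
   Context: $H^2_{\mathbb D}$ is the Hardy space of the unit disc and $M_z$ is multiplication by $z$ on it. The condition $\operatorname{ran}V_1=\operatorname{ran}V_2$ is equivalent (for commuting isometries) to the defect operator $I-V_1V_1^*-V_2V_2^*+V_1V_2V_2^*V_1^*$ being a difference of two mutually orthogonal projections whose ranges sum to $\ker(V_1V_2)^*$. *)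

From mathcomp Require Import all_boot all_algebra.
From mathcomp Require Import complex.
From mathcomp Require Import reals.
Import GRing.Theory Num.Theory.
Set Implicit Arguments. Unset Strict Implicit. Unset Printing Implicit Defensive.
Local Open Scope ring_scope.

Section Hilbert.
Variable R : realType.

Definition is_inner_product (V : lmodType R[i]) (ip : V -> V -> R[i]) : Prop :=
  [/\ (forall (a : R[i]) (x y z : V), ip (a *: x + y) z = a * ip x z + ip y z),
      (forall x y : V, ip y x = (ip x y)^*),
      (forall x : V, 0 <= ip x x) &
      (forall x : V, ip x x = 0 -> x = 0)].

Definition hnorm (V : lmodType R[i]) (ip : V -> V -> R[i]) (x : V) : R :=
  Num.sqrt (complex.Re (ip x x)).

Definition hcauchy (V : lmodType R[i]) (ip : V -> V -> R[i]) (u : nat -> V) :=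
  forall e : R, 0 < e -> exists N : nat, forall m n : nat,
    (N <= m)%N -> (N <= n)%N -> hnorm ip (u m - u n) < e.

Definition hconverges (V : lmodType R[i]) (ip : V -> V -> R[i]) (u : nat -> V) (l : V) :=
  forall e : R, 0 < e -> exists N : nat, forall n : nat,
    (N <= n)%N -> hnorm ip (u n - l) < e.

Definition is_hilbert_sp (V : lmodType R[i]) (ip : V -> V -> R[i]) : Prop :=
  is_inner_product ip /\
  (forall u : nat -> V, hcauchy ip u -> exists l : V, hconverges ip u l).

Definition is_linear_op (V W : lmodType R[i]) (f : V -> W) : Prop :=
  forall (a : R[i]) (x y : V), f (a *: x + y) = a *: f x + f y.

Definition is_isometry_op (V : lmodType R[i]) (ip : V -> V -> R[i]) (f : V -> V) : Prop :=
  is_linear_op f /\ forall x y : V, ip (f x) (f y) = ip x y.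

Definition is_unitary_op (V : lmodType R[i]) (ip : V -> V -> R[i]) (f : V -> V) : Prop :=
  is_isometry_op ip f /\ forall y : V, exists x : V, f x = y.

Definition same_range (V : lmodType R[i]) (f g : V -> V) : Prop :=
  (forall x, exists y, g y = f x) /\ (forall x, exists y, f y = g x).

Definition series_to (a : nat -> R) (s : R) : Prop :=
  forall e : R, 0 < e -> exists N : nat, forall n : nat,
    (N <= n)%N -> `| \sum_(0 <= k < n) a k - s | < e.

(* H^2_D (x) L, realised (via Taylor coefficients f = sum_n a_n z^n, a_n in L)
   as the square-summable L-valued coefficient sequences. *)
Definition in_H2 (L : lmodType R[i]) (ipL : L -> L -> R[i]) (a : nat -> L) : Prop :=
  exists s : R, series_to (fun n => hnorm ipL (a n) ^+ 2) s.

(* M_z (x) T on H^2 (x) L, in coefficients: (a_n)_n |-> (0, T a_0, T a_1, ...) *)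
Definition Mz_tensor (L : lmodType R[i]) (T : L -> L) (a : nat -> L) : nat -> L :=
  fun n => if n is m.+1 then T (a m) else 0.

(* U = (U1, U2) : H -> (H^2 (x) L) (+) K is a unitary operator:
   linear, norm preserving (||x||^2 = sum_n ||a_n||^2 + ||k||^2) and onto. *)
Definition is_unitary_onto_H2L_sum (H L K : lmodType R[i])
    (ipH : H -> H -> R[i]) (ipL : L -> L -> R[i]) (ipK : K -> K -> R[i])
    (U1 : H -> nat -> L) (U2 : H -> K) : Prop :=
  [/\ (forall (a : R[i]) (x y : H) (n : nat),
          U1 (a *: x + y) n = a *: U1 x n + U1 y n),
      is_linear_op U2,
      (forall x : H, series_to (fun n => hnorm ipL (U1 x n) ^+ 2)
                               (hnorm ipH x ^+ 2 - hnorm ipK (U2 x) ^+ 2)) &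
      (forall (a : nat -> L) (k : K), in_H2 ipL a ->
          exists x : H, U1 x = a /\ U2 x = k)].

End Hilbert.

(** Wold decomposition of [V1].  The range of an isometry is closed, so the
projection theorem computes [V1^*] pointwise, and [P = 1 - V1 V1^*] projects
onto the wandering subspace [L = (ran V1)^perp].  Iterating [x = P x + V1 V1^* x]
gives [x = sum_(n < N) V1^n P V1^*n x + V1^N V1^*N x] with orthogonal summands,
so [|V1^*N x|] decreases, [V1^N V1^*N x] is Cauchy, and its limit is the
component of [x] in [K = {k | P V1^*n k = 0 for all n}], on which [V1] is
unitary.  The coefficients [(P V1^*n x)_n] map the rest of [H] isometrically
onto [H^2 (x) L], turning [V1] into the shift.  Since [ran V1 = ran V2], the
operator [U = V1^* V2] is unitary with [V2 = V1 U] and [U V1 = V1 U]; hence [U]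
commutes with [P] and [V1^*], reduces [L] and [K], and [V2] acts on the
coefficients as [M_z (x) U|_L]. *)

From HB Require Import structures.
From mathcomp Require Import all_boot all_order all_algebra.
From mathcomp Require Import complex.
From mathcomp Require Import classical_sets reals boolp.
From mathcomp Require Import ring lra.
Import GRing.Theory Num.Theory Order.TTheory.
Set Implicit Arguments. Unset Strict Implicit. Unset Printing Implicit Defensive.
Local Open Scope ring_scope.

Section ComplexParts.
Variable R : realType.
Implicit Types (z w : R[i]) (r : R).

Lemma complex_ext z w : complex.Re z = complex.Re w -> complex.Im z = complex.Im w -> z = w.
Proof. by case: z; case: w => /= ? ? ? ? -> ->. Qed.

Lemma Re_conj z : complex.Re z^* = complex.Re z.
Proof. by case: z. Qed.

Lemma Im_conj z : complex.Im z^* = - complex.Im z.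
Proof. by case: z. Qed.

Lemma ReM z w :
  complex.Re (z * w) = complex.Re z * complex.Re w - complex.Im z * complex.Im w.
Proof. by case: z; case: w. Qed.

Lemma ImM z w :
  complex.Im (z * w) = complex.Re z * complex.Im w + complex.Im z * complex.Re w.
Proof. by case: z => a b; case: w => c d /=; ring. Qed.

Lemma ReD z w : complex.Re (z + w) = complex.Re z + complex.Re w.
Proof. by case: z; case: w. Qed.

Lemma ReN z : complex.Re (- z) = - complex.Re z.
Proof. by case: z. Qed.

Lemma Re_conjiM z : complex.Re ('i^* * z) = complex.Im z.
Proof. by rewrite ReM Re_conj Im_conj /=; ring. Qed.

Lemma Re_conj_realM r z : complex.Re ((r%:C)%C^* * z) = r * complex.Re z.
Proof. by rewrite ReM Re_conj Im_conj /=; ring. Qed.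

End ComplexParts.

Section InnerProduct.
Variables (R : realType) (H : lmodType R[i]) (ip : H -> H -> R[i]).
Hypothesis hip : is_inner_product ip.
Implicit Types (x y z : H) (a : R[i]).

Definition sqnorm x : R := complex.Re (ip x x).

Lemma ipZDl a x y z : ip (a *: x + y) z = a * ip x z + ip y z.
Proof. by case: hip. Qed.

Lemma ipC x y : ip y x = (ip x y)^*.
Proof. by case: hip. Qed.

Lemma ip0l z : ip 0 z = 0.
Proof.
have := ipZDl 1 0 0 z; rewrite scaler0 addr0 mul1r => h.
by apply: (addrI (ip 0 z)); rewrite addr0 -h.
Qed.

Lemma ipDl x y z : ip (x + y) z = ip x z + ip y z.
Proof. by rewrite -[x]scale1r ipZDl mul1r scale1r. Qed.

Lemma ipZl a x z : ip (a *: x) z = a * ip x z.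
Proof. by rewrite -[a *: x]addr0 ipZDl ip0l addr0. Qed.

Lemma ipNl x z : ip (- x) z = - ip x z.
Proof. by rewrite -scaleN1r ipZl mulN1r. Qed.

Lemma ipBl x y z : ip (x - y) z = ip x z - ip y z.
Proof. by rewrite ipDl ipNl. Qed.

Lemma ip0r z : ip z 0 = 0.
Proof. by rewrite ipC ip0l rmorph0. Qed.

Lemma ipDr x y z : ip z (x + y) = ip z x + ip z y.
Proof. by rewrite ipC ipDl rmorphD /= -!ipC. Qed.

Lemma ipZr a x z : ip z (a *: x) = a^* * ip z x.
Proof. by rewrite ipC ipZl rmorphM /= -ipC. Qed.

Lemma ipNr x z : ip z (- x) = - ip z x.
Proof. by rewrite -scaleN1r ipZr rmorphN1 mulN1r. Qed.

Lemma ip_sqnorm x : ip x x = ((sqnorm x)%:C)%C.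
Proof.
have : 0 <= ip x x by case: hip.
by rewrite lecE => /andP[/eqP Im0 _]; apply: complex_ext; rewrite //= Im0.
Qed.

Lemma sqnorm_ge0 x : 0 <= sqnorm x.
Proof. have : 0 <= ip x x by case: hip.
by rewrite lecE => /andP[]. Qed.

Lemma sqnorm_eq0 x : sqnorm x = 0 -> x = 0.
Proof. by move=> h; case: hip => _ _ _; apply; rewrite ip_sqnorm h. Qed.

Lemma sqnorm0 : sqnorm 0 = 0.
Proof. by rewrite /sqnorm ip0l. Qed.

Lemma Re_ipC x y : complex.Re (ip y x) = complex.Re (ip x y).
Proof. by rewrite ipC Re_conj. Qed.

Lemma sqnormD x y : sqnorm (x + y) = sqnorm x + sqnorm y + 2 * complex.Re (ip x y).
Proof. by rewrite /sqnorm ipDl !ipDr !ReD (Re_ipC x y); ring. Qed.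

Lemma sqnormN x : sqnorm (- x) = sqnorm x.
Proof. by rewrite /sqnorm ipNl ipNr opprK. Qed.

Lemma sqnormB x y : sqnorm (x - y) = sqnorm x + sqnorm y - 2 * complex.Re (ip x y).
Proof. by rewrite sqnormD sqnormN ipNr ReN; ring. Qed.

Lemma sqnormBC x y : sqnorm (x - y) = sqnorm (y - x).
Proof. by rewrite -sqnormN opprB. Qed.

Lemma sqnormZ a x :
  sqnorm (a *: x) = (complex.Re a ^+ 2 + complex.Im a ^+ 2) * sqnorm x.
Proof.
rewrite /sqnorm ipZl ipZr ip_sqnorm !ReM !ImM Re_conj Im_conj /=; ring.
Qed.

Lemma sqnorm_real_scale (t : R) x : sqnorm ((t%:C)%C *: x) = t ^+ 2 * sqnorm x.
Proof. by rewrite sqnormZ /= expr0n addr0. Qed.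

Lemma parallelogram x y : sqnorm (x + y) + sqnorm (x - y) = 2 * sqnorm x + 2 * sqnorm y.
Proof. by rewrite sqnormD sqnormB; ring. Qed.

Lemma sqnormD_le x y : sqnorm (x + y) <= 2 * sqnorm x + 2 * sqnorm y.
Proof. by have := parallelogram x y; have := sqnorm_ge0 (x - y); lra. Qed.

Lemma sqnormB_le x y : sqnorm (x - y) <= 2 * sqnorm x + 2 * sqnorm y.
Proof. by have := sqnormD_le x (- y); rewrite sqnormN. Qed.

Lemma Im_ip x y : complex.Im (ip x y) = complex.Re (ip x ('i%C *: y)).
Proof. by rewrite ipZr Re_conjiM. Qed.

Lemma Cauchy_Schwarz_Re x y : complex.Re (ip x y) ^+ 2 <= sqnorm x * sqnorm y.
Proof.
have [y0|ypos] := eqVneq (sqnorm y) 0.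
  by rewrite (sqnorm_eq0 y0) ip0r sqnorm0 mulr0 /= expr0n.
have qy : 0 < sqnorm y by rewrite lt0r ypos sqnorm_ge0.
set r := complex.Re (ip x y).
have := sqnorm_ge0 (x - ((r / sqnorm y)%:C)%C *: y).
rewrite sqnormB sqnorm_real_scale ipZr Re_conj_realM -/r => h.
suff : 0 <= sqnorm x * sqnorm y - r ^+ 2 by rewrite subr_ge0.
have -> : sqnorm x * sqnorm y - r ^+ 2 =
    sqnorm y * (sqnorm x + (r / sqnorm y) ^+ 2 * sqnorm y - 2 * (r / sqnorm y * r)).
  by field; rewrite ypos.
by rewrite mulr_ge0 // ltW.
Qed.

End InnerProduct.

Lemma subrBB (V : zmodType) (u v w : V) : u - v - (u - w) = w - v.
Proof. by rewrite opprB addrC addrA subrK. Qed.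

Section RealSequences.
Variable R : realType.
Implicit Types (a : nat -> R) (s t : R).

Lemma small_ge0_eq0 t : 0 <= t -> (forall e : R, 0 < e -> t < e) -> t = 0.
Proof.
move=> t0 small; apply/le_anti; rewrite t0 andbT.
by apply/ler_addgt0Pr => e e0; rewrite add0r ltW // small.
Qed.

Definition rcvg a s :=
  forall e : R, 0 < e -> exists N, forall n, (N <= n)%N -> `|a n - s| < e.

Lemma rcvg_unique a s t : rcvg a s -> rcvg a t -> s = t.
Proof.
move=> cs ct; apply/eqP; rewrite -subr_eq0 -normr_eq0; apply/eqP.
apply: small_ge0_eq0 => // e e0.
have e2 : 0 < e / 2 by rewrite divr_gt0.
have [N1 hN1] := cs _ e2; have [N2 hN2] := ct _ e2.
have := hN1 (maxn N1 N2) (leq_maxl _ _); have := hN2 (maxn N1 N2) (leq_maxr _ _).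
have := ler_normB (a (maxn N1 N2) - t) (a (maxn N1 N2) - s).
by rewrite (_ : _ - t - (_ - s) = s - t); [lra | ring].
Qed.

Lemma rcvg_cauchy a s : rcvg a s ->
  forall e, 0 < e -> exists N, forall m n, (N <= m)%N -> (N <= n)%N -> `|a m - a n| < e.
Proof.
move=> cs e e0; have e2 : 0 < e / 2 by rewrite divr_gt0.
have [N hN] := cs _ e2; exists N => m n hm hn.
have := hN m hm; have := hN n hn; have := ler_normB (a m - s) (a n - s).
by rewrite (_ : a m - s - (a n - s) = a m - a n); [lra | ring].
Qed.

Lemma nonincreasing_ge0_rcvg a :
  (forall n, a n.+1 <= a n) -> (forall n, 0 <= a n) -> exists s, rcvg a s.
Proof.
move=> dec pos.
pose E : set R := range (fun n => - a n).
have supE : has_sup E by split; [exists (- a 0%N), 0%N | exists 0 => _ [n _ <-]; rewrite oppr_le0].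
have ub n : - a n <= sup E by apply: sup_upper_bound => //; exists n.
exists (- sup E) => e e0.
have [_ [N _ <-] hN] := sup_adherent e0 supE.
exists N => n hn.
have aNn : a n <= a N.
  by apply: (homo_leq (r := fun i j => j <= i)) hn => // y x z xy yz; apply: le_trans yz xy.
have ubn := ub n; move: (sup E) hN ubn => S hN ubn.
by rewrite opprK ger0_norm; lra.
Qed.

Lemma inv_succ_lt (e : R) : 0 < e -> exists N : nat, N.+1%:R^-1 < e.
Proof. by move=> e0; have [k hk] := ltr_add_invr e0; exists k; rewrite add0r in hk. Qed.

Lemma inv_succ_le (m n : nat) : (m <= n)%N -> n.+1%:R^-1 <= m.+1%:R^-1 :> R.
Proof. by move=> h; rewrite lef_pV2 ?posrE ?ltr0Sn // ler_nat ltnS. Qed.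

End RealSequences.

Section NormConvergence.
Variables (R : realType) (H : lmodType R[i]) (ip : H -> H -> R[i]).
Hypothesis hip : is_inner_product ip.
Implicit Types (u v : nat -> H) (x y l m : H).
Local Notation sqnorm := (sqnorm ip).

Definition cvgn u l :=
  forall e : R, 0 < e -> exists N, forall n, (N <= n)%N -> sqnorm (u n - l) < e.

Definition cauchyn u :=
  forall e : R, 0 < e -> exists N, forall m n : nat,
    (N <= m)%N -> (N <= n)%N -> sqnorm (u m - u n) < e.

Lemma hnorm_sqr x : hnorm ip x ^+ 2 = sqnorm x.
Proof. by rewrite /hnorm sqr_sqrtr // sqnorm_ge0. Qed.

Lemma hnorm_lt x (e : R) : 0 < e -> (hnorm ip x < e) = (sqnorm x < e ^+ 2).
Proof.
move=> e0; rewrite /hnorm -{1}(ger0_norm (ltW e0)) -sqrtr_sqr ltr_sqrt //.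
exact: exprn_gt0.
Qed.

Lemma cauchyn_hcauchy u : cauchyn u -> hcauchy ip u.
Proof.
move=> cu e e0; have [N hN] := cu (e ^+ 2) (exprn_gt0 2 e0).
by exists N => m n hm hn; rewrite hnorm_lt // hN.
Qed.

Lemma hconverges_cvgn u l : hconverges ip u l -> cvgn u l.
Proof.
move=> cu e e0; have se0 : 0 < Num.sqrt e by rewrite sqrtr_gt0.
have [N hN] := cu _ se0; exists N => n hn.
by have := hN n hn; rewrite hnorm_lt // sqr_sqrtr // ltW.
Qed.

Lemma cvgn_unique u l m : cvgn u l -> cvgn u m -> l = m.
Proof.
move=> cl cm; apply/eqP; rewrite -subr_eq0; apply/eqP/(sqnorm_eq0 hip).
apply: small_ge0_eq0; first exact: sqnorm_ge0.
move=> e e0; have e4 : 0 < e / 4 by rewrite divr_gt0.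
have [N1 hN1] := cl _ e4; have [N2 hN2] := cm _ e4.
pose n := maxn N1 N2.
have := hN1 n (leq_maxl _ _); have := hN2 n (leq_maxr _ _).
have := sqnormB_le hip (l - u n) (m - u n).
rewrite (_ : l - u n - (m - u n) = l - m); last by rewrite opprB addrA subrK.
by rewrite (sqnormBC hip l (u n)) (sqnormBC hip m (u n)); lra.
Qed.

Lemma cvgn_eventually u v l :
  (exists N, forall n, (N <= n)%N -> u n = v n) -> cvgn u l -> cvgn v l.
Proof.
move=> [M hM] cu e e0; have [N hN] := cu e e0; exists (maxn M N) => n.
by rewrite geq_max => /andP[hMn hNn]; rewrite -hM // hN.
Qed.

Lemma cvgn_cst l : cvgn (fun=> l) l.
Proof. by move=> e e0; exists 0%N => n _; rewrite subrr sqnorm0. Qed.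

Lemma cvgn_shift u l : cvgn u l -> cvgn (fun n => u n.+1) l.
Proof. by move=> cu e e0; have [N hN] := cu e e0; exists N => n hn; apply/hN/leqW. Qed.

Lemma cvgn_contraction (f : H -> H) u l :
  (forall x y, f (x - y) = f x - f y) -> (forall x, sqnorm (f x) <= sqnorm x) ->
  cvgn u l -> cvgn (fun n => f (u n)) (f l).
Proof.
move=> fB fle cu e e0; have [N hN] := cu e e0; exists N => n hn.
by rewrite -fB; apply: le_lt_trans (fle _) (hN n hn).
Qed.

Lemma cvgnD u v l m : cvgn u l -> cvgn v m -> cvgn (fun n => u n + v n) (l + m).
Proof.
move=> cu cv e e0; have e4 : 0 < e / 4 by rewrite divr_gt0.
have [N1 hN1] := cu _ e4; have [N2 hN2] := cv _ e4.
exists (maxn N1 N2) => n; rewrite geq_max => /andP[h1 h2].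
have := hN1 n h1; have := hN2 n h2; have := sqnormD_le hip (u n - l) (v n - m).
by rewrite addrACA -opprD; lra.
Qed.

Lemma cvgnZ (a : R[i]) u l : cvgn u l -> cvgn (fun n => a *: u n) (a *: l).
Proof.
move=> cu e e0.
set c := complex.Re a ^+ 2 + complex.Im a ^+ 2.
have c1 : 0 < c + 1 by rewrite ltr_wpDl // addr_ge0 // sqr_ge0.
have [N hN] := cu _ (divr_gt0 e0 c1); exists N => n hn.
rewrite -scalerBr (sqnormZ hip) -/c.
have := hN n hn; rewrite ltr_pdivlMr // => lt.
have := sqnorm_ge0 hip (u n - l); have : 0 <= c by rewrite addr_ge0 // sqr_ge0.
by nra.
Qed.

Lemma Re_ip_cvgn u l y (c : R) :
  cvgn u l -> (forall n, complex.Re (ip (u n) y) = c) -> complex.Re (ip l y) = c.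
Proof.
move=> cu uc.
suff : (complex.Re (ip l y) - c) ^+ 2 = 0 by move/eqP; rewrite sqrf_eq0 subr_eq0 => /eqP.
apply: small_ge0_eq0; first exact: sqr_ge0.
move=> e e0; have y1 : 0 < sqnorm y + 1 by rewrite ltr_wpDl // sqnorm_ge0.
have [N hN] := cu _ (divr_gt0 e0 y1).
have := Cauchy_Schwarz_Re hip (l - u N) y.
rewrite (ipBl hip) ReD ReN uc (sqnormBC hip l) => CS.
apply: le_lt_trans CS _.
have := hN N (leqnn N); rewrite ltr_pdivlMr // => lt.
have := sqnorm_ge0 hip (u N - l); have := sqnorm_ge0 hip y.
by nra.
Qed.

Lemma sqnorm_cvgn u l : cvgn u l -> rcvg (fun n => sqnorm (u n)) (sqnorm l).
Proof.
move=> cu e e0.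
have l1 : 0 < sqnorm l + 1 by rewrite ltr_wpDl // sqnorm_ge0.
pose d := Num.min (e / 2) ((e / 4) ^+ 2 / (sqnorm l + 1)).
have d0 : 0 < d by rewrite lt_min !divr_gt0 // exprn_gt0 // divr_gt0.
have [N hN] := cu d d0; exists N => n hn.
have lt_d := hN n hn.
have lt1 : sqnorm (u n - l) < e / 2 by apply: lt_le_trans lt_d _; rewrite ge_min lexx.
have lt2 : sqnorm (u n - l) * (sqnorm l + 1) < (e / 4) ^+ 2.
  by rewrite -ltr_pdivlMr //; apply: lt_le_trans lt_d _; rewrite ge_min lexx orbT.
have -> : sqnorm (u n) - sqnorm l =
    sqnorm (u n - l) + 2 * complex.Re (ip (u n - l) l).
  have -> : sqnorm (u n) = sqnorm ((u n - l) + l) by rewrite subrK.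
  by rewrite (sqnormD hip (u n - l) l); ring.
have CS := Cauchy_Schwarz_Re hip (u n - l) l.
set r := complex.Re (ip (u n - l) l) in CS *.
have r2 : r ^+ 2 < (e / 4) ^+ 2.
  apply: le_lt_trans CS _; apply: le_lt_trans lt2.
  by have := sqnorm_ge0 hip l; have := sqnorm_ge0 hip (u n - l); nra.
have q0 := sqnorm_ge0 hip (u n - l).
by rewrite ltr_norml; apply/andP; split; nra.
Qed.

End NormConvergence.

Lemma hilbert_cvgn (R : realType) (H : lmodType R[i]) (ip : H -> H -> R[i])
  (hH : is_hilbert_sp ip) (u : nat -> H) : cauchyn ip u -> exists l, cvgn ip u l.
Proof.
move=> /cauchyn_hcauchy cu; have [l hl] := hH.2 u cu.
by exists l; apply: hconverges_cvgn hl.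
Qed.

Section LinearOperator.
Variables (R : realType) (H : lmodType R[i]) (f : H -> H).
Hypothesis hf : is_linear_op f.

Lemma linop0 : f 0 = 0.
Proof.
have := hf 1 0 0; rewrite scaler0 addr0 scale1r => h.
by apply: (addrI (f 0)); rewrite addr0 -h.
Qed.

Lemma linopD x y : f (x + y) = f x + f y.
Proof. by rewrite -[x]scale1r hf !scale1r. Qed.

Lemma linopZ a x : f (a *: x) = a *: f x.
Proof. by rewrite -[a *: x]addr0 hf linop0 addr0. Qed.

Lemma linopN x : f (- x) = - f x.
Proof. by rewrite -scaleN1r linopZ scaleN1r. Qed.

Lemma linopB x y : f (x - y) = f x - f y.
Proof. by rewrite linopD linopN. Qed.

Lemma linop_iter n : is_linear_op (iter n f).
Proof. by elim: n => [|n IH] a x y //=; rewrite IH hf. Qed.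

End LinearOperator.

Section Isometry.
Variables (R : realType) (H : lmodType R[i]) (ip : H -> H -> R[i]) (V : H -> H).
Hypotheses (hip : is_inner_product ip) (hV : is_isometry_op ip V).

Lemma isometry_linear : is_linear_op V.
Proof. by case: hV. Qed.

Lemma ip_isometry x y : ip (V x) (V y) = ip x y.
Proof. by case: hV. Qed.

Lemma sqnorm_isometry x : sqnorm ip (V x) = sqnorm ip x.
Proof. by rewrite /sqnorm ip_isometry. Qed.

Lemma isometry_inj : injective V.
Proof.
move=> x y Vxy; apply/eqP; rewrite -subr_eq0; apply/eqP/(sqnorm_eq0 hip).
by rewrite -sqnorm_isometry (linopB isometry_linear) Vxy subrr sqnorm0.
Qed.

Lemma isometry_iter n : is_isometry_op ip (iter n V).
Proof.
split; first exact: (linop_iter isometry_linear n).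
by elim: n => //= n IH x y; rewrite ip_isometry.
Qed.

End Isometry.

Section MinimalDistance.
Variables (R : realType) (H : lmodType R[i]) (ip : H -> H -> R[i]).
Hypothesis hip : is_inner_product ip.
Local Notation sqnorm := (sqnorm ip).

Lemma Re_ip_eq0_of_min (e w : H) :
  (forall t : R, sqnorm e <= sqnorm (e - (t%:C)%C *: w)) -> complex.Re (ip e w) = 0.
Proof.
move=> emin; set r := complex.Re (ip e w); set s := sqnorm w.
have s0 : 0 <= s := sqnorm_ge0 hip w.
(* minimality at [t = r / (s + 1)] forces [0 <= - r^2 (s + 2)] *)
set t := r / (s + 1).
have := emin t.
rewrite (sqnormB hip) (sqnorm_real_scale hip) (ipZr hip) Re_conj_realM -/r -/s => le_e.
have key : (s + 1) ^+ 2 * (t ^+ 2 * s - 2 * (t * r)) = - (r ^+ 2 * (s + 2)).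
  by rewrite /t; field; rewrite gt_eqF // ltr_wpDl.
have neg : 0 <= - (r ^+ 2 * (s + 2)).
  by rewrite -key mulr_ge0 ?sqr_ge0 //; move: le_e; clearbody t; lra.
have r2 := sqr_ge0 r.
by apply/eqP; rewrite -sqrf_eq0; apply/eqP; nra.
Qed.

Lemma ip_eq0_of_min (e w : H) :
  (forall a : R[i], sqnorm e <= sqnorm (e - a *: w)) -> ip e w = 0.
Proof.
move=> emin; apply: complex_ext.
  by apply: Re_ip_eq0_of_min => t; apply: emin.
rewrite (Im_ip hip) /=; apply: Re_ip_eq0_of_min => t.
by rewrite scalerA; apply: emin.
Qed.

End MinimalDistance.

Section Projection.
Variables (R : realType) (H : lmodType R[i]) (ip : H -> H -> R[i]) (V : H -> H).
Hypotheses (hH : is_hilbert_sp ip) (hV : is_isometry_op ip V).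
Let hip := hH.1.
Let Vlin := isometry_linear hV.
Local Notation sqnorm := (sqnorm ip).

Lemma minimizing_cauchy x (d : R) (ys : nat -> H) :
  (forall y, d <= sqnorm (x - V y)) ->
  (forall n, sqnorm (x - V (ys n)) < d + n.+1%:R^-1) -> cauchyn ip ys.
Proof.
move=> d_le ys_near e e0; have [N hN] := inv_succ_lt (divr_gt0 e0 (ltr0n R 4)).
exists N => m n hm hn.
(* parallelogram law around the midpoint: |V ys_m - V ys_n|^2 <= 2/(m+1) + 2/(n+1) *)
pose w := x - V (2^-1 *: (ys m + ys n)).
have mid : (x - V (ys m)) + (x - V (ys n)) = w + w.
  have half : (2^-1 + 2^-1 : R[i]) = 1 by rewrite [RHS](splitr 1) mul1r.
  rewrite /w (linopZ Vlin) (linopD Vlin) addrACA -opprD.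
  by rewrite [RHS]addrACA -opprD -scalerDl half scale1r.
have := parallelogram hip (x - V (ys m)) (x - V (ys n)).
rewrite mid (sqnormD hip w w) subrBB.
have := d_le (2^-1 *: (ys m + ys n)); rewrite -/w.
have := ys_near m; have := ys_near n.
have := inv_succ_le R hm; have := inv_succ_le R hn; move: hN.
have ww : complex.Re (ip w w) = sqnorm w by [].
rewrite -(linopB Vlin) (sqnorm_isometry hV) (sqnormBC hip (ys n)).
by move: (m.+1%:R^-1) (n.+1%:R^-1) (N.+1%:R^-1) => a b c; lra.
Qed.

Lemma isometry_range_min x : exists y, forall z, sqnorm (x - V y) <= sqnorm (x - V z).
Proof.
pose E : set R := range (fun y => sqnorm (x - V y)).
have infE : has_inf E.
  by split; [exists (sqnorm (x - V 0)), 0 | exists 0 => _ [y _ <-]; apply: sqnorm_ge0].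
have d_le y : inf E <= sqnorm (x - V y) by apply: ge_inf; [case: infE | exists y].
have near_inf n : exists y, sqnorm (x - V y) < inf E + n.+1%:R^-1.
  have pos : 0 < n.+1%:R^-1 :> R by rewrite invr_gt0 ltr0Sn.
  by have [_ [y _ <-] ?] := inf_adherent pos infE; exists y.
have [ys ys_near] := choice near_inf.
have [y ys_y] := hilbert_cvgn hH (minimizing_cauchy d_le ys_near).
exists y => z; apply: le_trans (d_le z).
move: (inf E) d_le ys_near => d d_le ys_near.
have dist_cvg : cvgn ip (fun n => x - V (ys n)) (x - V y).
  move=> e e0; have [N hN] := ys_y e e0; exists N => n hn.
  by rewrite subrBB -(linopB Vlin) (sqnorm_isometry hV) (sqnormBC hip); apply: hN.
apply/ler_addgt0Pr => e e0.
have [N1 hN1] := sqnorm_cvgn hip dist_cvg (divr_gt0 e0 (ltr0n R 2)).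
have [N2 hN2] := inv_succ_lt (divr_gt0 e0 (ltr0n R 2)).
have := hN1 _ (leq_maxl N1 N2); rewrite ltr_norml => /andP[lo hi].
have := ys_near (maxn N1 N2); have := inv_succ_le R (leq_maxr N1 N2); move: hN2.
by move: ((maxn N1 N2).+1%:R^-1) (N2.+1%:R^-1) => a b; lra.
Qed.

Lemma isometry_range_projection x : exists y, forall z, ip (x - V y) (V z) = 0.
Proof.
have [y ymin] := isometry_range_min x; exists y => z.
apply: ip_eq0_of_min => // a.
by rewrite -(linopZ Vlin) -addrA -opprD -(linopD Vlin); apply: ymin.
Qed.

End Projection.

Record subspace (R : realType) (H : lmodType R[i]) := Subspace {
  in_sub : H -> Prop;
  in_sub0 : in_sub 0;
  in_subZD : forall (a : R[i]) x y, in_sub x -> in_sub y -> in_sub (a *: x + y) }.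

Section Subspace.
Variables (R : realType) (H : lmodType R[i]) (S : subspace H).

Definition sub_pred : {pred H} := fun x => `[< in_sub S x >].

Fact sub_pred_submod_closed : submod_closed sub_pred.
Proof.
split; first by apply/asboolP; apply: in_sub0.
by move=> a x y /asboolP Sx /asboolP Sy; apply/asboolP/in_subZD.
Qed.

HB.instance Definition _ :=
  GRing.isSubmodClosed.Build R[i] H sub_pred sub_pred_submod_closed.

Inductive subsp : predArgType := SubSp x & x \in sub_pred.
Definition subsp_val w : H := let: SubSp x _ := w in x.
HB.instance Definition _ := [isSub of subsp for subsp_val].
HB.instance Definition _ := [Choice of subsp by <:].
HB.instance Definition _ := [SubChoice_isSubZmodule of subsp by <:].
HB.instance Definition _ := [SubZmodule_isSubLmodule of subsp by <:].

Definition sub_elem x (Sx : in_sub S x) : subsp := SubSp (introT (asboolP _) Sx).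

Lemma in_sub_val (w : subsp) : in_sub S (val w).
Proof. by case: w => x Sx; apply/asboolP. Qed.

Definition sub_restrict (f : H -> H) (fS : forall x, in_sub S x -> in_sub S (f x))
  (w : subsp) : subsp := sub_elem (fS _ (in_sub_val w)).

Variable ip : H -> H -> R[i].

Definition sub_ip (v w : subsp) : R[i] := ip (val v) (val w).

Lemma sub_inner_product : is_inner_product ip -> is_inner_product sub_ip.
Proof.
case=> ZD C pos def; split.
- by move=> a x y z; apply: ZD.
- by move=> x y; apply: C.
- by move=> x; apply: pos.
- by move=> x x0; apply: val_inj; apply: def.
Qed.

Lemma hnorm_sqr_sub (hip : is_inner_product ip) (w : subsp) :
  hnorm sub_ip w ^+ 2 = sqnorm ip (val w).
Proof. exact: hnorm_sqr (sub_inner_product hip) w. Qed.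

Lemma sub_hilbert : is_hilbert_sp ip ->
  (forall u l, (forall n, in_sub S (u n)) -> cvgn ip u l -> in_sub S l) ->
  is_hilbert_sp sub_ip.
Proof.
move=> hH closed; split; first exact: sub_inner_product hH.1.
move=> u cu; have [l ul] := hH.2 (fun n => val (u n)) cu.
have Sl : in_sub S l by apply: closed (fun n => in_sub_val (u n)) (hconverges_cvgn ul).
by exists (sub_elem Sl).
Qed.

Lemma restrict_unitary f (fS : forall x, in_sub S x -> in_sub S (f x)) :
  is_isometry_op ip f -> (forall y, in_sub S y -> exists2 x, in_sub S x & f x = y) ->
  is_unitary_op sub_ip (sub_restrict fS).
Proof.
move=> [flin fip] fsurj; split; first split.
- by move=> a x y; apply: val_inj; rewrite /= flin.
- by move=> x y; apply: fip.
- by move=> w; have [x Sx fx] := fsurj _ (in_sub_val w); exists (sub_elem Sx); apply: val_inj.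
Qed.

End Subspace.

Section Wold.
Variables (R : realType) (H : lmodType R[i]) (ip : H -> H -> R[i]) (V : H -> H).
Hypotheses (hH : is_hilbert_sp ip) (hV : is_isometry_op ip V).
Let hip := hH.1.
Let Vlin := isometry_linear hV.
Local Notation sqnorm := (sqnorm ip).
Implicit Types (x y z l : H).

Definition wandering x := forall z, ip x (V z) = 0.

Lemma wandering0 : wandering 0.
Proof. by move=> z; rewrite ip0l. Qed.

Lemma wanderingZD a x y : wandering x -> wandering y -> wandering (a *: x + y).
Proof. by move=> wx wy z; rewrite ipZDl // wx wy mulr0 addr0. Qed.

(* [Vadj] is the adjoint [V^*]: [x - V (Vadj x)] is orthogonal to [ran V]. *)
Definition Vadj x : H := projT1 (cid (isometry_range_projection hH hV x)).

Definition wproj x := x - V (Vadj x).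

Lemma wproj_wandering x : wandering (wproj x).
Proof. by rewrite /wproj /Vadj; case: cid. Qed.

Lemma wold_split x : x = wproj x + V (Vadj x).
Proof. by rewrite subrK. Qed.

Lemma sqnorm_wandering_add l y : wandering l -> sqnorm (l + V y) = sqnorm l + sqnorm y.
Proof. by move=> wl; rewrite sqnormD // wl mulr0 addr0 (sqnorm_isometry hV). Qed.

Lemma wold_split_unique x l y : wandering l -> x = l + V y -> wproj x = l /\ Vadj x = y.
Proof.
move=> wl xE.
have e : wproj x - l = V (y - Vadj x).
  by rewrite (linopB Vlin) /wproj {1}xE addrAC [l + _]addrC addrK.
have /eqP : wproj x - l = 0.
  by apply: (sqnorm_eq0 hip); rewrite /sqnorm {2}e ipBl // wproj_wandering wl subrr.
rewrite subr_eq0 => /eqP wx; split=> //.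
apply: (isometry_inj hip hV); apply/eqP; rewrite eq_sym -subr_eq0.
by rewrite -(linopB Vlin) -e wx subrr.
Qed.

Lemma Vadj_V y : Vadj (V y) = y.
Proof. by have [] := @wold_split_unique (V y) 0 y wandering0; rewrite ?add0r. Qed.

Lemma wproj_V y : wproj (V y) = 0.
Proof. by have [] := @wold_split_unique (V y) 0 y wandering0; rewrite ?add0r. Qed.

Lemma Vadj_wandering l : wandering l -> Vadj l = 0.
Proof. by move=> wl; have [] := @wold_split_unique l l 0 wl; rewrite ?(linop0 Vlin) ?addr0. Qed.

Lemma wproj_wandering_id l : wandering l -> wproj l = l.
Proof. by move=> wl; have [] := @wold_split_unique l l 0 wl; rewrite ?(linop0 Vlin) ?addr0. Qed.

Lemma wold_splitZD a x y :
  wproj (a *: x + y) = a *: wproj x + wproj y /\ Vadj (a *: x + y) = a *: Vadj x + Vadj y.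
Proof.
apply: wold_split_unique; first by apply: wanderingZD; apply: wproj_wandering.
by rewrite Vlin addrACA -scalerDr -!wold_split.
Qed.

Lemma Vadj_linear : is_linear_op Vadj.
Proof. by move=> a x y; case: (wold_splitZD a x y). Qed.

Lemma wproj_linear : is_linear_op wproj.
Proof. by move=> a x y; case: (wold_splitZD a x y). Qed.

Lemma sqnorm_wold_split x : sqnorm x = sqnorm (wproj x) + sqnorm (Vadj x).
Proof. by rewrite {1}(wold_split x) (sqnorm_wandering_add _ (wproj_wandering x)). Qed.

Lemma sqnorm_Vadj_le x : sqnorm (Vadj x) <= sqnorm x.
Proof. by rewrite (sqnorm_wold_split x) lerDr sqnorm_ge0. Qed.

Lemma sqnorm_iter_Vadj_le n x : sqnorm (iter n Vadj x) <= sqnorm x.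
Proof. by elim: n => //= n IH; apply: le_trans (sqnorm_Vadj_le _) IH. Qed.

Lemma iter_Vadj_V n N y : (n <= N)%N -> iter n Vadj (iter N V y) = iter (N - n) V y.
Proof.
elim: n => [|n IH] nN; first by rewrite subn0.
rewrite iterS IH; last exact: ltnW.
by rewrite -(subnSK nN) iterS Vadj_V.
Qed.

Definition wcoef n x := wproj (iter n Vadj x).

Lemma wcoef_wandering n x : wandering (wcoef n x).
Proof. exact: wproj_wandering. Qed.

Lemma wcoef_linear n : is_linear_op (wcoef n).
Proof. by move=> a x y; rewrite /wcoef (linop_iter Vadj_linear) wproj_linear. Qed.

Lemma sqnorm_wcoef_le n x : sqnorm (wcoef n x) <= sqnorm x.
Proof.
apply: le_trans (sqnorm_iter_Vadj_le n x).
by rewrite (sqnorm_wold_split (iter n Vadj x)) lerDl sqnorm_ge0.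
Qed.

Lemma wcoef0_V x : wcoef 0 (V x) = 0.
Proof. exact: wproj_V. Qed.

Lemma wcoefS_V n x : wcoef n.+1 (V x) = wcoef n x.
Proof. by rewrite /wcoef iterSr Vadj_V. Qed.

Lemma sqnorm_sum_wcoef N x :
  sqnorm x = \sum_(0 <= k < N) sqnorm (wcoef k x) + sqnorm (iter N Vadj x).
Proof.
elim: N => [|N IH]; first by rewrite big_nil add0r.
by rewrite big_nat_recr //= -addrA -sqnorm_wold_split.
Qed.

Definition shift_part N x := iter N V (iter N Vadj x).

Lemma shift_part_linear N : is_linear_op (shift_part N).
Proof. by move=> a x y; rewrite /shift_part (linop_iter Vadj_linear) (linop_iter Vlin). Qed.

Lemma sqnorm_shift_part N x : sqnorm (shift_part N x) = sqnorm (iter N Vadj x).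
Proof. exact: sqnorm_isometry (isometry_iter hV N) _. Qed.

Lemma sqnorm_sub_shift_part N x :
  sqnorm (x - shift_part N x) = sqnorm x - sqnorm (iter N Vadj x).
Proof.
elim: N x => [|N IH] x; first by rewrite /= !subrr sqnorm0.
rewrite /shift_part [iter N.+1 Vadj x]iterSr [iter N.+1 V _]iterS.
have -> : x - V (shift_part N (Vadj x)) = wproj x + V (Vadj x - shift_part N (Vadj x)).
  by rewrite (linopB Vlin) addrA -wold_split.
rewrite (sqnorm_wandering_add _ (wproj_wandering x)) IH.
by rewrite [sqnorm x]sqnorm_wold_split addrA.
Qed.

Lemma sqnorm_shift_part_sub N M x : (N <= M)%N ->
  sqnorm (shift_part N x - shift_part M x) =
  sqnorm (iter N Vadj x) - sqnorm (iter M Vadj x).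
Proof.
move=> NM; have -> : shift_part M x = iter N V (shift_part (M - N) (iter N Vadj x)).
  by rewrite /shift_part -!iterD subnKC // subnK.
rewrite /shift_part -(linopB (linop_iter Vlin N)) (sqnorm_isometry (isometry_iter hV N)).
by rewrite sqnorm_sub_shift_part -iterD subnK.
Qed.

Lemma shift_part_cauchy x : cauchyn ip (shift_part^~ x).
Proof.
have dec N : sqnorm (iter N.+1 Vadj x) <= sqnorm (iter N Vadj x).
  by rewrite iterS sqnorm_Vadj_le.
have [s cs] := @nonincreasing_ge0_rcvg _ (fun N => sqnorm (iter N Vadj x)) dec
  (fun N => sqnorm_ge0 hip _).
have anti m n : (m <= n)%N -> sqnorm (iter n Vadj x) <= sqnorm (iter m Vadj x).
  apply: (homo_leq (f := fun N => sqnorm (iter N Vadj x)) (r := fun i j => j <= i)) => //.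
  by move=> y z t yz zt; apply: le_trans zt yz.
move=> e e0; have [N hN] := rcvg_cauchy cs e0; exists N => m n hm hn.
wlog mn : m n hm hn / (m <= n)%N => [sym|].
  by case: (leqP m n) => [|/ltnW] mn; [|rewrite sqnormBC //]; apply: sym.
rewrite sqnorm_shift_part_sub //.
by have := hN m n hm hn; rewrite ger0_norm // subr_ge0 anti.
Qed.

Definition unitary_component x : H :=
  projT1 (cid (hilbert_cvgn hH (shift_part_cauchy x))).

Lemma shift_part_cvg x : cvgn ip (shift_part^~ x) (unitary_component x).
Proof. by rewrite /unitary_component; case: cid. Qed.

Lemma sqnorm_wcoef_series x :
  rcvg (fun N => \sum_(0 <= k < N) sqnorm (wcoef k x))
       (sqnorm x - sqnorm (unitary_component x)).
Proof.
move=> e e0; have [N hN] := sqnorm_cvgn hip (shift_part_cvg x) e0.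
exists N => n nN; have := hN n nN.
rewrite sqnorm_shift_part (sqnorm_sum_wcoef n x) -normrN.
by congr (`|_| < _); ring.
Qed.

Lemma unitary_component_linear : is_linear_op unitary_component.
Proof.
move=> a x y; apply: (cvgn_unique hip (shift_part_cvg _)).
apply: cvgn_eventually (cvgnD hip (cvgnZ hip a (shift_part_cvg x)) (shift_part_cvg y)).
by exists 0%N => n _; rewrite shift_part_linear.
Qed.

Lemma unitary_component_V x : unitary_component (V x) = V (unitary_component x).
Proof.
apply: (cvgn_unique hip (cvgn_shift (shift_part_cvg (V x)))).
apply: cvgn_eventually (cvgn_contraction _ _ (shift_part_cvg x)).
- by exists 0%N => n _; rewrite /shift_part [iter n.+1 Vadj _]iterSr Vadj_V.
- exact: linopB Vlin.
- by move=> y; rewrite (sqnorm_isometry hV).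
Qed.

Definition in_unitary_part x := forall n, wcoef n x = 0.

Lemma in_unitary_part0 : in_unitary_part 0.
Proof. by move=> n; rewrite (linop0 (wcoef_linear n)). Qed.

Lemma in_unitary_partZD a x y :
  in_unitary_part x -> in_unitary_part y -> in_unitary_part (a *: x + y).
Proof. by move=> Kx Ky n; rewrite wcoef_linear Kx Ky scaler0 addr0. Qed.

Lemma cvgn_wcoef n u l : cvgn ip u l -> cvgn ip (fun k => wcoef n (u k)) (wcoef n l).
Proof.
apply: cvgn_contraction; first exact: linopB (wcoef_linear n).
exact: sqnorm_wcoef_le.
Qed.

Lemma in_unitary_part_closed u l :
  (forall n, in_unitary_part (u n)) -> cvgn ip u l -> in_unitary_part l.
Proof.
move=> Ku ul n; apply: (cvgn_unique hip (cvgn_wcoef n ul)).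
by apply: cvgn_eventually (cvgn_cst hip 0); exists 0%N => k _; rewrite Ku.
Qed.

Lemma wandering_closed u l : (forall n, wandering (u n)) -> cvgn ip u l -> wandering l.
Proof.
move=> wu ul z.
have Re0 w : complex.Re (ip l (V w)) = 0 by apply: (Re_ip_cvgn hip ul) => n; rewrite wu.
apply: complex_ext; first by rewrite Re0.
by rewrite (Im_ip hip) -(linopZ Vlin) Re0.
Qed.

Lemma unitary_component_in x : in_unitary_part (unitary_component x).
Proof.
move=> n; apply: (cvgn_unique hip (cvgn_wcoef n (shift_part_cvg x))).
apply: cvgn_eventually (cvgn_cst hip 0); exists n.+1 => N nN.
rewrite /wcoef /shift_part iter_Vadj_V; last exact: ltnW.
by rewrite -(subnSK nN) iterS wproj_V.
Qed.

Lemma shift_part_unitary N y : in_unitary_part y -> shift_part N y = y.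
Proof.
move=> Ky; apply/eqP; rewrite eq_sym -subr_eq0; apply/eqP/(sqnorm_eq0 hip).
rewrite sqnorm_sub_shift_part (sqnorm_sum_wcoef N y) big1_seq ?add0r ?subrr //.
by move=> k _; rewrite Ky sqnorm0.
Qed.

Lemma unitary_component_id y : in_unitary_part y -> unitary_component y = y.
Proof.
move=> Ky; apply: (cvgn_unique hip (shift_part_cvg y)).
by apply: cvgn_eventually (cvgn_cst hip y); exists 0%N => n _; rewrite shift_part_unitary.
Qed.

Lemma in_unitary_part_V x : in_unitary_part x -> in_unitary_part (V x).
Proof. by move=> Kx [|n]; rewrite ?wcoef0_V ?wcoefS_V. Qed.

Lemma in_unitary_part_Vadj x : in_unitary_part x -> in_unitary_part (Vadj x).
Proof. by move=> Kx n; rewrite /wcoef -iterSr; apply: Kx. Qed.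

Lemma unitary_part_split x : in_unitary_part x -> x = V (Vadj x).
Proof. by move=> Kx; rewrite {1}(wold_split x) [wproj x](Kx 0%N) add0r. Qed.

Fixpoint shift_series (b : nat -> H) (i j : nat) : H :=
  if j is j'.+1 then b i + V (shift_series b i.+1 j') else 0.

Section ShiftSeries.
Variable b : nat -> H.
Hypothesis wb : forall n, wandering (b n).

Lemma sqnorm_shift_series i j :
  sqnorm (shift_series b i j) = \sum_(i <= n < i + j) sqnorm (b n).
Proof.
elim: j i => [|j IH] i /=; first by rewrite addn0 big_geq // sqnorm0.
by rewrite sqnorm_wandering_add // IH big_ltn ?addnS ?ltnS ?leq_addr.
Qed.

Lemma shift_series_split N i j :
  shift_series b i (N + j) = shift_series b i N + iter N V (shift_series b (i + N) j).
Proof.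
elim: N i => [|N IH] i /=; first by rewrite add0r addn0.
by rewrite IH (linopD Vlin) addrA addSnnS.
Qed.

Lemma iter_Vadj_shift_series i j : iter j Vadj (shift_series b i j) = 0.
Proof.
elim: j i => [|j IH] i //.
by rewrite [shift_series _ _ _.+1]/= iterSr (linopD Vadj_linear) Vadj_wandering // Vadj_V add0r IH.
Qed.

Lemma wcoef_shift_series m M : (m < M)%N -> wcoef m (shift_series b 0 M) = b m.
Proof.
move=> mM; rewrite /wcoef -(subnKC (ltnW mM)) shift_series_split.
rewrite (linopD (linop_iter Vadj_linear m)) iter_Vadj_shift_series add0r.
rewrite iter_Vadj_V // subnn /= add0n -(subnSK mM) /=.
by rewrite (linopD wproj_linear) wproj_V addr0 wproj_wandering_id.
Qed.

Lemma shift_series_cvg s : rcvg (fun N => \sum_(0 <= k < N) sqnorm (b k)) s ->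
  exists t, cvgn ip (shift_series b 0) t.
Proof.
move=> cs; apply: (hilbert_cvgn hH) => e e0.
have [N hN] := rcvg_cauchy cs e0; exists N => m n hm hn.
wlog nm : m n hm hn / (n <= m)%N => [sym|].
  by case: (leqP n m) => [|/ltnW] nm; [|rewrite sqnormBC //]; apply: sym.
have := hN m n hm hn.
rewrite -(subnKC nm) shift_series_split addrAC subrr add0r.
rewrite (sqnorm_isometry (isometry_iter hV n)) sqnorm_shift_series add0n.
rewrite (big_cat_nat (leq0n n) (leq_addr _ n)) /= addrAC subrr add0r.
exact/le_lt_trans/ler_norm.
Qed.

Lemma wold_coef_surj s k :
  rcvg (fun N => \sum_(0 <= n < N) sqnorm (b n)) s -> in_unitary_part k ->
  exists x, (forall n, wcoef n x = b n) /\ unitary_component x = k.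
Proof.
move=> cs Kk; have [t bt] := shift_series_cvg cs.
have wt m : wcoef m t = b m.
  apply: (cvgn_unique hip (cvgn_wcoef m bt)).
  apply: cvgn_eventually (cvgn_cst hip (b m)).
  by exists m.+1 => n mn; rewrite wcoef_shift_series.
(* [|t|^2] is the sum of the series both directly and through the Wold decomposition *)
have ut : unitary_component t = 0.
  apply: (sqnorm_eq0 hip).
  suff /eqP : sqnorm t = sqnorm t - sqnorm (unitary_component t).
    by rewrite -subr_eq0 opprB addrC subrK => /eqP.
  apply: (rcvg_unique (sqnorm_cvgn hip bt)) => e e0.
  have [N hN] := sqnorm_wcoef_series t e0; exists N => n nN.
  by rewrite sqnorm_shift_series add0n -(eq_bigr _ (fun i _ => congr1 sqnorm (wt i))) hN.
exists (t + k); split; first by move=> n; rewrite (linopD (wcoef_linear n)) wt Kk addr0.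
by rewrite (linopD unitary_component_linear) ut add0r unitary_component_id.
Qed.

End ShiftSeries.

Definition wandering_sub : subspace H := Subspace wandering0 wanderingZD.
Definition unitary_sub : subspace H := Subspace in_unitary_part0 in_unitary_partZD.
Local Notation ipL := (sub_ip (S := wandering_sub) ip).
Local Notation ipK := (sub_ip (S := unitary_sub) ip).

Definition coef_map x n : subsp wandering_sub :=
  sub_elem (S := wandering_sub) (wcoef_wandering n x).
Definition unitary_map x : subsp unitary_sub :=
  sub_elem (S := unitary_sub) (unitary_component_in x).

Lemma wandering_sub_hilbert : is_hilbert_sp ipL.
Proof. by apply: (sub_hilbert hH); apply: wandering_closed. Qed.

Lemma unitary_sub_hilbert : is_hilbert_sp ipK.
Proof. by apply: (sub_hilbert hH); apply: in_unitary_part_closed. Qed.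

Lemma wold_unitary : is_unitary_onto_H2L_sum ip ipL ipK coef_map unitary_map.
Proof.
split.
- by move=> a x y n; apply: val_inj; rewrite /= wcoef_linear.
- by move=> a x y; apply: val_inj; rewrite /= unitary_component_linear.
- move=> x e e0; have [N hN] := sqnorm_wcoef_series x e0; exists N => n nN.
  rewrite hnorm_sqr // (hnorm_sqr_sub hip) (eq_bigr _ (fun k _ => hnorm_sqr_sub hip _)).
  exact: hN.
- move=> a k [s cs].
  have cs' : rcvg (fun N => \sum_(0 <= n < N) sqnorm (val (a n))) s.
    move=> e e0; have [N hN] := cs e e0; exists N => n nN.
    by rewrite -(eq_bigr _ (fun k _ => hnorm_sqr_sub hip (a k))); apply: hN.
  have [x [xa xk]] := wold_coef_surj (fun n => in_sub_val (a n)) cs' (in_sub_val k).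
  exists x; split; last exact: val_inj.
  by apply: funext => n; apply: val_inj; rewrite /= xa.
Qed.

Lemma coef_map_V x : coef_map (V x) = Mz_tensor id (coef_map x).
Proof.
apply: funext => -[|n]; apply: val_inj; first exact: wcoef0_V.
exact: wcoefS_V.
Qed.

Definition V_unitary_part := sub_restrict (S := unitary_sub) in_unitary_part_V.

Lemma unitary_map_V x : unitary_map (V x) = V_unitary_part (unitary_map x).
Proof. by apply: val_inj; rewrite /= unitary_component_V. Qed.

Lemma V_unitary_part_unitary : is_unitary_op ipK V_unitary_part.
Proof.
apply: restrict_unitary => // y Ky; exists (Vadj y); first exact: in_unitary_part_Vadj.
by rewrite -unitary_part_split.
Qed.

Section Intertwining.
Variable U : H -> H.
Hypotheses (hU : is_isometry_op ip U) (Usurj : forall y, exists x, U x = y).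
Hypothesis UV : forall x, U (V x) = V (U x).
Let Ulin := isometry_linear hU.

Lemma wandering_U l : wandering (U l) <-> wandering l.
Proof.
split=> wl z; first by rewrite -(ip_isometry hU) UV wl.
by have [w <-] := Usurj z; rewrite -UV (ip_isometry hU) wl.
Qed.

Lemma wold_split_U x : wproj (U x) = U (wproj x) /\ Vadj (U x) = U (Vadj x).
Proof.
apply: wold_split_unique; first exact/wandering_U/wproj_wandering.
by rewrite -UV -(linopD Ulin) -wold_split.
Qed.

Lemma iter_Vadj_U n x : iter n Vadj (U x) = U (iter n Vadj x).
Proof. by elim: n => //= n ->; case: (wold_split_U (iter n Vadj x)). Qed.

Lemma wcoef_U n x : wcoef n (U x) = U (wcoef n x).
Proof. by rewrite /wcoef iter_Vadj_U; case: (wold_split_U (iter n Vadj x)). Qed.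

Lemma unitary_component_U x : unitary_component (U x) = U (unitary_component x).
Proof.
have shiftU N : shift_part N (U x) = U (shift_part N x).
  rewrite /shift_part iter_Vadj_U; move: (iter N Vadj x) => y.
  by elim: N => //= N ->; rewrite UV.
apply: (cvgn_unique hip (shift_part_cvg (U x))).
apply: cvgn_eventually (cvgn_contraction _ _ (shift_part_cvg x)).
- by exists 0%N => N _; rewrite shiftU.
- exact: linopB Ulin.
- by move=> y; rewrite (sqnorm_isometry hU).
Qed.

Lemma in_unitary_part_U x : in_unitary_part (U x) <-> in_unitary_part x.
Proof.
split=> Kx n; last by rewrite wcoef_U Kx (linop0 Ulin).
by apply: (isometry_inj hip hU); rewrite -wcoef_U Kx (linop0 Ulin).
Qed.

Definition U_wandering_part :=
  sub_restrict (S := wandering_sub) (fun l => (wandering_U l).2).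

Lemma U_wandering_part_unitary : is_unitary_op ipL U_wandering_part.
Proof.
apply: restrict_unitary => // l wl; have [x Ux] := Usurj l.
by exists x => //; apply/wandering_U; rewrite Ux.
Qed.

Lemma coef_map_VU x : coef_map (V (U x)) = Mz_tensor U_wandering_part (coef_map x).
Proof.
apply: funext => -[|n]; apply: val_inj; first exact: wcoef0_V.
by rewrite /= wcoefS_V wcoef_U.
Qed.

Lemma in_unitary_part_VU x : in_unitary_part x -> in_unitary_part (V (U x)).
Proof. by move=> Kx; apply/in_unitary_part_V/in_unitary_part_U. Qed.

Definition VU_unitary_part := sub_restrict (S := unitary_sub) in_unitary_part_VU.

Lemma unitary_map_VU x : unitary_map (V (U x)) = VU_unitary_part (unitary_map x).
Proof. by apply: val_inj; rewrite /= unitary_component_V unitary_component_U. Qed.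

Lemma VU_unitary_part_unitary : is_unitary_op ipK VU_unitary_part.
Proof.
apply: restrict_unitary.
  split=> [a x y|x y]; first by rewrite Ulin Vlin.
  by rewrite (ip_isometry hV) (ip_isometry hU).
move=> y Ky; have [x Ux] := Usurj (Vadj y); exists x.
  by apply/in_unitary_part_U; rewrite Ux; apply: in_unitary_part_Vadj.
by rewrite Ux -unitary_part_split.
Qed.

End Intertwining.

End Wold.

Section CommutingIsometries.
Variables (R : realType) (H : lmodType R[i]) (ip : H -> H -> R[i]) (V1 V2 : H -> H).
Hypotheses (hH : is_hilbert_sp ip) (hV1 : is_isometry_op ip V1) (hV2 : is_isometry_op ip V2).
Hypotheses (hcomm : forall x, V1 (V2 x) = V2 (V1 x)) (hran : same_range V1 V2).

Definition V1adj_V2 x := Vadj hH hV1 (V2 x).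

Lemma V1_V1adj_V2 x : V1 (V1adj_V2 x) = V2 x.
Proof. by rewrite /V1adj_V2; have [y <-] := hran.2 x; rewrite Vadj_V. Qed.

Lemma V1adj_V2_isometry : is_isometry_op ip V1adj_V2.
Proof.
split=> [a x y|x y]; first by rewrite /V1adj_V2 (isometry_linear hV2) Vadj_linear.
by rewrite -(ip_isometry hV1) !V1_V1adj_V2 (ip_isometry hV2).
Qed.

Lemma V1adj_V2_surj y : exists x, V1adj_V2 x = y.
Proof. by have [x V2x] := hran.1 y; exists x; rewrite /V1adj_V2 V2x Vadj_V. Qed.

Lemma V1adj_V2_V1 x : V1adj_V2 (V1 x) = V1 (V1adj_V2 x).
Proof. by apply: (isometry_inj hH.1 hV1); rewrite !V1_V1adj_V2 hcomm. Qed.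

End CommutingIsometries.

Theorem theorem5p4 (R : realType) (H : lmodType R[i]) (ipH : H -> H -> R[i])
  (V1 V2 : H -> H) :
  is_hilbert_sp ipH ->
  is_isometry_op ipH V1 -> is_isometry_op ipH V2 ->
  (forall x, V1 (V2 x) = V2 (V1 x)) ->
  same_range V1 V2 ->
  exists (L : lmodType R[i]) (ipL : L -> L -> R[i])
         (K : lmodType R[i]) (ipK : K -> K -> R[i])
         (W : L -> L) (W1 W2 : K -> K)
         (U1 : H -> nat -> L) (U2 : H -> K),
    [/\ is_hilbert_sp ipL, is_hilbert_sp ipK &
         is_unitary_onto_H2L_sum ipH ipL ipK U1 U2] /\
    [/\ is_unitary_op ipL W, is_unitary_op ipK W1, is_unitary_op ipK W2 &
         (forall k, W1 (W2 k) = W2 (W1 k))] /\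
    (forall x, U1 (V1 x) = Mz_tensor id (U1 x) /\ U2 (V1 x) = W1 (U2 x)) /\
    (forall x, U1 (V2 x) = Mz_tensor W (U1 x) /\ U2 (V2 x) = W2 (U2 x)).
Proof.
move=> hH hV1 hV2 hcomm hran.
have hU := V1adj_V2_isometry hH hV1 hV2 hran.
have Usurj := V1adj_V2_surj hH hV1 hran.
have UV := V1adj_V2_V1 hH hV1 hcomm hran.
exists _, (sub_ip (S := wandering_sub V1 hH) ipH), _, (sub_ip (S := unitary_sub hH hV1) ipH).
exists (U_wandering_part hU Usurj UV), (V_unitary_part (hH := hH) (hV := hV1)).
exists (VU_unitary_part (hH := hH) (hV := hV1) hU Usurj UV), (coef_map hH hV1), (unitary_map hH hV1).
split; [split | split; [split | split]].
- exact: wandering_sub_hilbert.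
- exact: unitary_sub_hilbert.
- exact: wold_unitary.
- exact: U_wandering_part_unitary.
- exact: V_unitary_part_unitary.
- exact: VU_unitary_part_unitary.
- by move=> k; apply: val_inj; rewrite /= UV.
- by move=> x; rewrite coef_map_V unitary_map_V.
- by move=> x; rewrite -(V1_V1adj_V2 hH hV1 hran) coef_map_VU unitary_map_VU.
Qed.
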